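(* Let $A$ be a bounded distributive lattice, $X$ its Priestley space, and $\kappa$ a regular cardinal. Then $A$ is a $\kappa$-frame if and only if ${\sf cl}(U)$ is a clopen upset for each $\kappa$-clopen upset $U$ of $X$.
   Context: $A$ is a $\kappa$-frame if every subset of cardinality $<\kappa$ has a join and each such join $\bigvee S$ is distributive ($a\wedge\bigvee S=\bigvee\{a\wedge s:s\in S\}$ for all $a$). The Priestley space $X$ of $A$ is the set of prime filters ordered by inclusion, with topology generated by $\{\mathfrak s(a)\setminus\mathfrak s(b)\}$, $\mathfrak s(a)=\{x:a\in x\}$. ${\sf cl}$ is topological closure. A $\kappa$-clopen upset is a union of fewer than $\kappa$ clopen upsets. *)

From mathcomp Require Import all_boot all_order.
Set Implicit Arguments. Unset Strict Implicit. Unset Printing Implicit Defensive.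
Import Order.TTheory.
Local Open Scope order_scope.

Definition card_lt (T U : Type) : Prop :=
  (exists f : T -> U, injective f) /\ ~ (exists g : U -> T, injective g).

Definition regular_cardinal (K : Type) : Prop :=
  (exists f : nat -> K, injective f) /\
  forall (I : K -> Prop) (F : K -> K -> Prop),
    card_lt {i : K | I i} K ->
    (forall i, I i -> card_lt {x : K | F i x} K) ->
    card_lt {x : K | exists i, I i /\ F i x} K.

Section Priestley.
Context {disp : Order.disp_t} (A : tbDistrLatticeType disp).

Definition is_join (S : A -> Prop) (j : A) : Prop :=
  (forall s, S s -> s <= j) /\ (forall u, (forall s, S s -> s <= u) -> j <= u).

Definition kappa_frame (K : Type) : Prop :=
  forall S : A -> Prop, card_lt {x : A | S x} K ->
    exists j, is_join S j /\
      forall a, is_join (fun t => exists2 s, S s & t = Order.meet a s) (Order.meet a j).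

Definition prime_filter (F : A -> Prop) : Prop :=
  [/\ F \top, ~ F \bot,
      (forall a b, F a -> a <= b -> F b),
      (forall a b, F a -> F b -> F (Order.meet a b)) &
      (forall a b, F (Order.join a b) -> F a \/ F b)].

Definition pspace : Type := {F : A -> Prop | prime_filter F}.

Definition ple (x y : pspace) : Prop := forall a, proj1_sig x a -> proj1_sig y a.

Definition sA (a : A) : pspace -> Prop := fun x => proj1_sig x a.

Definition fin_basic (l : seq (A * A)) : pspace -> Prop :=
  fun x => forall p, p \in l -> sA p.1 x /\ ~ sA p.2 x.

(* open sets of the topology generated by the sets s(a) \ s(b) *)
Definition popen (U : pspace -> Prop) : Prop :=
  forall x, U x -> exists l, fin_basic l x /\ (forall y, fin_basic l y -> U y).

Definition pclosure (U : pspace -> Prop) : pspace -> Prop :=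
  fun x => forall V, popen V -> V x -> exists y, V y /\ U y.

Definition pclopen (U : pspace -> Prop) : Prop :=
  popen U /\ popen (fun x => ~ U x).

Definition pupset (U : pspace -> Prop) : Prop :=
  forall x y, ple x y -> U x -> U y.

Definition clopen_upset (U : pspace -> Prop) : Prop := pclopen U /\ pupset U.

Definition kappa_clopen_upset (K : Type) (U : pspace -> Prop) : Prop :=
  exists (I : K -> Prop) (F : K -> pspace -> Prop),
    [/\ card_lt {i : K | I i} K,
        (forall i, I i -> clopen_upset (F i)) &
        (forall x, U x <-> exists i, I i /\ F i x)].

End Priestley.

From mathcomp Require Import all_boot all_order boolp classical_sets.
Set Implicit Arguments. Unset Strict Implicit. Unset Printing Implicit Defensive.
Import Order.LTheory.
Local Open Scope order_scope.

(* Clopen upsets of the Priestley space are exactly the sets s(a).  For S a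
   subset of A, an element j is a join of S over which binary meets distribute
   iff s(j) is the closure of the union of the s(s), s in S: the closure is the
   least closed set s(u) containing the union, and a basic open s(f) \ s(g)
   missing the union says exactly that every f /\ s lies below g.  A
   kappa-clopen upset is such a union with |S| < kappa, so both sides of the
   theorem say the same thing.  The prime
   filter theorem and the compactness of the space both come from one Zorn
   argument on pairs (elements kept in, elements kept out) that stay consistent
   for a suitable relation Q. *)

Lemma card_lt_inj (T U K : Type) (f : T -> U) :
  injective f -> card_lt U K -> card_lt T K.
Proof.
move=> finj [[g ginj] noKU]; split; first by exists (g \o f) => ? ? /ginj /finj.
by case=> h hinj; apply: noKU; exists (f \o h) => ? ? /finj /hinj.
Qed.

Lemma sval_inj (T : Type) (P : T -> Prop) : injective (@sval T P).
Proof. by move=> [x px] [y py] /= xy; exact: eq_exist. Qed.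

Section Priestley.
Context {disp : Order.disp_t} (A : tbDistrLatticeType disp).
Implicit Types (a b c f j t u : A) (x y z : pspace A) (S : A -> Prop).

Lemma le_cut a b c : a `&` c <= b -> a <= b `|` c -> a <= b.
Proof. by move=> acb /meet_idPl <-; rewrite meetUr leUx acb leIr. Qed.

Lemma sA_top x : sA \top x. Proof. by case: x => F /= []. Qed.

Lemma sA_bot x : ~ sA \bot x. Proof. by case: x => F /= []. Qed.

Lemma sA_le x a b : a <= b -> sA a x -> sA b x.
Proof. by case: x => F /= [_ _ Fup _ _] ab Fa; exact: Fup Fa ab. Qed.

Lemma sA_meet x a b : sA (a `&` b) x <-> sA a x /\ sA b x.
Proof.
split; first by move=> ab; split; apply: sA_le ab; rewrite ?leIl ?leIr.
by case: x => F /= [_ _ _ FI _] [Fa Fb]; exact: FI.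
Qed.

Lemma sA_join x a b : sA (a `|` b) x <-> sA a x \/ sA b x.
Proof.
split; first by case: x => F /= [_ _ _ _ Fprime]; exact: Fprime.
by case=> [ax|bx]; [apply: sA_le ax | apply: sA_le bx]; rewrite ?leUl ?leUr.
Qed.

Section ConsistentPairs.
(* [Q f j]: asking a prime filter to contain [f] and to avoid [j] is still
   consistent. *)
Variable Q : A -> A -> Prop.
Hypothesis Q_mono : forall f j f' j', Q f j -> f <= f' -> j' <= j -> Q f' j'.
Hypothesis Q_irr : forall c, ~ Q c c.
Hypothesis Q_split : forall f j c, Q f j -> Q (f `&` c) j \/ Q f (j `|` c).
Hypothesis Q_top_bot : Q \top \bot.

Record qpair := QPair {
  qfil : A -> Prop;
  qide : A -> Prop;
  qfil_top : qfil \top;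
  qide_bot : qide \bot;
  qfilI : forall a b, qfil a -> qfil b -> qfil (a `&` b);
  qideU : forall a b, qide a -> qide b -> qide (a `|` b);
  qpairQ : forall f j, qfil f -> qide j -> Q f j }.

Definition qpair_le (p q : qpair) : bool :=
  `[< (forall a, qfil p a -> qfil q a) /\ (forall a, qide p a -> qide q a) >].

Definition qpair0 : qpair.
Proof.
refine (@QPair (fun a => a = \top) (fun a => a = \bot) erefl erefl _ _ _).
- by move=> a b -> ->; rewrite meetxx.
- by move=> a b -> ->; rewrite joinxx.
- by move=> f j -> ->.
Defined.

Lemma qpair_chain_ub (C : set qpair) :
  total_on C qpair_le -> exists q, forall p, C p -> qpair_le p q.
Proof.
move=> Ctot; have [[p0 Cp0]|noC] := pselect (exists p, C p); last first.
  by exists qpair0 => p Cp; case: noC; exists p.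
have Cub p q : C p -> C q -> exists2 r, C r &
    [/\ forall a, qfil p a -> qfil r a, forall a, qfil q a -> qfil r a,
        forall a, qide p a -> qide r a & forall a, qide q a -> qide r a].
  move=> Cp Cq; have [/asboolP[pq pq']|/asboolP[qp qp']] := Ctot p q Cp Cq.
    by exists q.
  by exists p.
pose F a := exists2 p, C p & qfil p a.
pose J a := exists2 p, C p & qide p a.
have FI a b : F a -> F b -> F (a `&` b).
  move=> [p Cp pa] [q Cq qb]; have [r Cr [pr qr _ _]] := Cub p q Cp Cq.
  by exists r => //; apply: qfilI; [exact: pr | exact: qr].
have JU a b : J a -> J b -> J (a `|` b).
  move=> [p Cp pa] [q Cq qb]; have [r Cr [_ _ pr qr]] := Cub p q Cp Cq.
  by exists r => //; apply: qideU; [exact: pr | exact: qr].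
have FJQ f j : F f -> J j -> Q f j.
  move=> [p Cp pf] [q Cq qj]; have [r Cr [pr _ _ qr]] := Cub p q Cp Cq.
  by apply: (qpairQ (q := r)); [exact: pr | exact: qr].
have Ftop : F \top by exists p0 => //; exact: qfil_top.
have Jbot : J \bot by exists p0 => //; exact: qide_bot.
exists (QPair Ftop Jbot FI JU FJQ) => p Cp.
by apply/asboolP; split => a pa; exists p.
Qed.

Lemma premaximal_qfil p c : premaximal qpair_le p ->
  (forall f j, qfil p f -> qide p j -> Q (f `&` c) j) -> qfil p c.
Proof.
move=> pmax pQ; pose F u := exists2 f, qfil p f & f `&` c <= u.
have Ftop : F \top by exists \top; [exact: qfil_top | exact: lex1].
have FI a b : F a -> F b -> F (a `&` b).
  move=> [f pf fa] [g pg gb]; exists (f `&` g); first exact: qfilI.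
  rewrite lexI; apply/andP; split; [apply: le_trans fa | apply: le_trans gb].
    exact: leI2 (leIl _ _) (lexx c).
  exact: leI2 (leIr _ _) (lexx c).
have FQ f j : F f -> qide p j -> Q f j.
  by move=> [g pg gf] pj; exact: Q_mono (pQ _ _ pg pj) gf (lexx j).
have /pmax/asboolP[+ _] : qpair_le p (QPair Ftop (qide_bot p) FI (@qideU p) FQ).
  by apply/asboolP; split => // a pa; exists a => //; exact: leIl.
by apply; exists \top; rewrite ?meet1x //; exact: qfil_top.
Qed.

Lemma premaximal_qide p c : premaximal qpair_le p ->
  (forall f j, qfil p f -> qide p j -> Q f (j `|` c)) -> qide p c.
Proof.
move=> pmax pQ; pose J u := exists2 j, qide p j & u <= j `|` c.
have Jbot : J \bot by exists \bot; [exact: qide_bot | exact: le0x].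
have JU a b : J a -> J b -> J (a `|` b).
  move=> [i pi ai] [j pj bj]; exists (i `|` j); first exact: qideU.
  rewrite leUx; apply/andP; split; [apply: le_trans ai _ | apply: le_trans bj _].
    exact: leU2 (leUl _ _) (lexx c).
  exact: leU2 (leUr _ _) (lexx c).
have JQ f j : qfil p f -> J j -> Q f j.
  by move=> pf [i pi ji]; exact: Q_mono (pQ _ _ pf pi) (lexx f) ji.
have /pmax/asboolP[_] : qpair_le p (QPair (qfil_top p) Jbot (@qfilI p) JU JQ).
  by apply/asboolP; split => // a pa; exists a => //; exact: leUl.
by apply; exists \bot; rewrite ?join0x //; exact: qide_bot.
Qed.

Lemma premaximal_qpair_total p c : premaximal qpair_le p -> qfil p c \/ qide p c.
Proof.
move=> pmax.
have [pQ|/existsNP[f1 /existsNP[j1 /not_implyP[pf1 /not_implyP[pj1 nQ1]]]]] :=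
  pselect (forall f j, qfil p f -> qide p j -> Q (f `&` c) j).
  by left; exact: premaximal_qfil.
right; apply: premaximal_qide => // f j pf pj.
have [Q1|Q2] := Q_split c (qpairQ (qfilI pf pf1) (qideU pj pj1)).
  by case: nQ1; apply: Q_mono Q1 _ (leUr _ _); rewrite leI2 ?leIr.
by apply: Q_mono Q2 (leIl _ _) _; rewrite leU2 ?leUl.
Qed.

Lemma premaximal_prime_filter p : premaximal qpair_le p -> prime_filter (qfil p).
Proof.
move=> pmax; have total := premaximal_qpair_total _ pmax.
have fil_ide c : qfil p c -> qide p c -> False.
  by move=> pc pc'; exact: Q_irr (qpairQ pc pc').
split; first exact: qfil_top.
- by move/fil_ide; apply; exact: qide_bot.
- move=> a b pa ab; have [//|pb] := total b.
  by case: (Q_irr (Q_mono (qpairQ pa pb) ab (lexx b))).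
- exact: qfilI.
- move=> a b pab; have [|pa] := total a; first by left.
  have [|pb] := total b; first by right.
  by case: (fil_ide _ pab (qideU pa pb)).
Qed.

Theorem exists_prime_filter_consistent :
  exists x, forall f j, sA f x -> ~ sA j x -> Q f j.
Proof.
have [p pmax] : exists p, premaximal qpair_le p.
  apply: (@ZL_preorder _ qpair0 qpair_le _ _ qpair_chain_ub).
    by move=> p; apply/asboolP.
  move=> p q r /asboolP[pq pq'] /asboolP[qr qr'].
  by apply/asboolP; split=> a; [move/pq/qr | move/pq'/qr'].
exists (exist _ _ (premaximal_prime_filter pmax)) => f j /= pf npj.
by apply: qpairQ pf _; case: (premaximal_qpair_total j pmax).
Qed.

End ConsistentPairs.

Lemma prime_filter_separation a b : ~ a <= b -> exists x, sA a x /\ ~ sA b x.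
Proof.
move=> nab.
have [x xQ] : exists x, forall f j, sA f x -> ~ sA j x -> ~ f `&` a <= j `|` b.
  apply: exists_prime_filter_consistent.
  - move=> f j f' j' Qfj ff' j'j le'; apply: Qfj.
    exact: le_trans (leI2 ff' (lexx a)) (le_trans le' (leU2 j'j (lexx b))).
  - by move=> c; apply; exact: le_trans (leIl c a) (leUl c b).
  - move=> f j c Qfj; apply: contrapT => /not_orP[/contrapT le1 /contrapT le2].
    by apply: Qfj; apply: (le_cut (c := c)); [rewrite meetAC | rewrite joinAC].
  - by rewrite meet1x join0x.
exists x; split.
  by apply: contrapT => nax; apply: (xQ _ _ (sA_top x) nax); rewrite meet1x leUl.
by move=> bx; apply: (xQ _ _ bx (@sA_bot x)); rewrite join0x leIl.
Qed.

Lemma sA_subset_le a b : (forall x, sA a x -> sA b x) -> a <= b.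
Proof.
move=> ab; apply: contrapT => /prime_filter_separation[x [ax nbx]].
exact: nbx (ab _ ax).
Qed.

Lemma sA_inj : injective (@sA _ A).
Proof.
move=> a b eab; apply: le_anti; apply/andP.
by split; apply: sA_subset_le => x; rewrite eab.
Qed.

Definition pclosed (C : pspace A -> Prop) : Prop := popen (fun x => ~ C x).

Lemma fin_basicE l x :
  fin_basic l x <-> sA (\meet_(p <- l) p.1) x /\ ~ sA (\join_(p <- l) p.2) x.
Proof.
elim: l => [|q l IHl]; rewrite ?big_nil ?big_cons.
  by split=> // _; split; [exact: sA_top | exact: sA_bot].
rewrite sA_meet sA_join; split.
  move=> qlx; have [q1x nq2x] := qlx q (mem_head _ _).
  have /IHl[Mx nJx] : fin_basic l x by move=> p pl; apply: qlx; rewrite in_cons pl orbT.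
  by split=> // -[].
move=> [[q1x Mx] nqJx] p; rewrite in_cons => /predU1P[->|pl].
  by split=> // q2x; apply: nqJx; left.
by apply: (IHl.2 _ _ pl); split=> // Jx; apply: nqJx; right.
Qed.

Lemma popen_nbhd U x : popen U -> U x ->
  exists f j, [/\ sA f x, ~ sA j x & forall y, sA f y -> ~ sA j y -> U y].
Proof.
move=> oU Ux; have [l [/fin_basicE[fx njx] lU]] := oU x Ux.
exists (\meet_(p <- l) p.1), (\join_(p <- l) p.2).
by split=> // y fy njy; apply/lU/fin_basicE.
Qed.

Lemma popen_diff f j : popen (fun y => sA f y /\ ~ sA j y).
Proof.
move=> x fjx; exists [:: (f, j)]; split=> [|y fjy]; last exact: fjy (mem_head _ _).
by move=> p; rewrite mem_seq1 => /eqP ->.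
Qed.

Lemma popen_sA a : popen (sA a).
Proof.
have -> : sA a = (fun y => sA a y /\ ~ sA \bot y).
  by apply: funext => y; apply: propext; split=> [ay|[]//]; split=> //; exact: sA_bot.
exact: popen_diff.
Qed.

Lemma pclosed_sA a : pclosed (sA a).
Proof.
rewrite /pclosed; have -> : (fun y => ~ sA a y) = (fun y => sA \top y /\ ~ sA a y).
  by apply: funext => y; apply: propext; split=> [nay|[]//]; split=> //; exact: sA_top.
exact: popen_diff.
Qed.

Lemma pclosedC U : popen U -> pclosed (fun x => ~ U x).
Proof.
rewrite /pclosed; have -> // : (fun x => ~ ~ U x) = U.
by apply: funext => x; apply: propext; split=> [/contrapT|Ux /(_ Ux)].
Qed.

Lemma clopen_upset_sA a : clopen_upset (sA a).
Proof. by split; [split; [exact: popen_sA | exact: pclosed_sA] | move=> x y; apply]. Qed.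

Lemma pclosure_sub U x : U x -> pclosure U x.
Proof. by move=> Ux V _ Vx; exists x. Qed.

Lemma pclosure_min U C : pclosed C -> (forall x, U x -> C x) ->
  forall x, pclosure U x -> C x.
Proof.
move=> cC UC x clx; apply: contrapT => nCx.
by have [y [nCy /UC]] := clx _ cC nCx.
Qed.

(* Compactness of the Priestley space, in the form: a closed set meeting every
   s(t) \ s(i) (t in D, i in E) meets all of them at once. *)
Lemma pclosed_compact (C : pspace A -> Prop) (D E : A -> Prop) :
  pclosed C -> D \top -> E \bot ->
  (forall a b, D a -> D b -> D (a `&` b)) ->
  (forall a b, E a -> E b -> E (a `|` b)) ->
  (forall t i, D t -> E i -> exists x, [/\ C x, sA t x & ~ sA i x]) ->
  exists2 z, C z & (forall t, D t -> sA t z) /\ (forall i, E i -> ~ sA i z).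
Proof.
move=> cC Dtop Ebot DI EU CDE.
pose Q f j := forall t i, D t -> E i ->
  exists x, [/\ C x, sA f x, ~ sA j x, sA t x & ~ sA i x].
have [z zQ] : exists z, forall f j, sA f z -> ~ sA j z -> Q f j.
  apply: exists_prime_filter_consistent.
  - move=> f j f' j' Qfj ff' j'j t i Dt Ei.
    have [x [Cx fx njx tx nix]] := Qfj t i Dt Ei.
    by exists x; split=> //; [exact: sA_le fx | move/(sA_le j'j)].
  - by move=> c /(_ _ _ Dtop Ebot)[x []].
  - move=> f j c Qfj.
    have [|/existsNP[t1 /existsNP[i1 /not_implyP[Dt1 /not_implyP[Ei1 nx1]]]]] :=
      pselect (Q (f `&` c) j); first by left.
    right => t2 i2 Dt2 Ei2.
    have [x [Cx fx njx /sA_meet[t1x t2x] /sA_join nix]] :=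
      Qfj _ _ (DI _ _ Dt1 Dt2) (EU _ _ Ei1 Ei2).
    have [cx|ncx] := pselect (sA c x).
      by case: nx1; exists x; split=> //; [exact/sA_meet | move=> i1x; apply: nix; left].
    by exists x; split=> //; [case/sA_join | move=> i2x; apply: nix; right].
  - move=> t i Dt Ei; have [x [Cx tx nix]] := CDE t i Dt Ei.
    by exists x; split=> //; [exact: sA_top | exact: sA_bot].
exists z; first apply: contrapT => nCz.
  have [f [j [fz njz fjC]]] := popen_nbhd cC nCz.
  by have [x [Cx fx njx _ _]] := zQ f j fz njz _ _ Dtop Ebot; exact: fjC x fx njx Cx.
split=> [t Dt|i Ei iz].
  by apply: contrapT => ntz; have [x [_ _ ntx tx _]] := zQ _ _ (sA_top z) ntz _ _ Dt Ebot.
by have [x [_ ix _ _ nix]] := zQ _ _ iz (@sA_bot z) _ _ Dtop Ei.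
Qed.


Lemma closed_upset_separation U y : pclosed U -> pupset U -> ~ U y ->
  exists2 a, (forall x, U x -> sA a x) & ~ sA a y.
Proof.
move=> cU upU nUy; apply: contrapT => nsep.
have [|||||z Uz [_ zy]] := @pclosed_compact U (eq^~ \top) (fun i => ~ sA i y) cU.
- by [].
- exact: sA_bot.
- by move=> a b -> ->; rewrite meetxx.
- by move=> a b nay nby /sA_join[].
- move=> _ i -> niy; apply: contrapT => nx; apply: nsep; exists i => // x Ux.
  by apply: contrapT => nix; apply: nx; exists x; split=> //; exact: sA_top.
by apply: nUy; apply: upU Uz => a az; apply: contrapT => nay; exact: zy a nay az.
Qed.

Lemma clopen_upsetP U : clopen_upset U -> exists a, U = sA a.
Proof.
move=> [[oU cU] upU].
have [a Ua aU] : exists2 a, (forall x, U x -> sA a x) & (forall x, sA a x -> U x).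
  apply: contrapT => nex.
  have [|||||z nUz [zD _]] := @pclosed_compact (fun x => ~ U x)
      (fun t => forall x, U x -> sA t x) (eq^~ \bot) (pclosedC oU).
  - by move=> x _; exact: sA_top.
  - by [].
  - by move=> a b Ua Ub x Ux; apply/sA_meet; split; [exact: Ua | exact: Ub].
  - by move=> a b -> ->; rewrite joinxx.
  - move=> t _ Ut ->; apply: contrapT => nx; apply: nex; exists t => // x tx.
    by apply: contrapT => nUx; apply: nx; exists x; split=> //; exact: sA_bot.
  by have [a /zD] := closed_upset_separation cU upU nUz.
by exists a; apply: funext => x; apply: propext; split; [exact: Ua | exact: aU].
Qed.

Definition sA_union S : pspace A -> Prop := fun x => exists2 s, S s & sA s x.

Definition distributive_join S j : Prop :=
  is_join S j /\ forall a, is_join (fun t => exists2 s, S s & t = a `&` s) (a `&` j).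

Lemma sA_union_sub S u : (forall s, S s -> s <= u) -> forall x, sA_union S x -> sA u x.
Proof. by move=> Su x [s Ss sx]; exact: sA_le (Su s Ss) sx. Qed.

Lemma distributive_join_pclosure S j :
  distributive_join S j -> pclosure (sA_union S) = sA j.
Proof.
move=> [[Sj _] distr]; apply: funext => x; apply: propext; split.
  exact: pclosure_min (@pclosed_sA j) (sA_union_sub Sj) x.
move=> jx V oV Vx; apply: contrapT => nV.
have [f [g [fx ngx fgV]]] := popen_nbhd oV Vx.
have fjg : f `&` j <= g.
  apply: (distr f).2 => _ [s Ss ->]; apply: sA_subset_le => y /sA_meet[fy sy].
  by apply: contrapT => ngy; apply: nV; exists y; split; [exact: fgV | exists s].
by apply: ngx; apply: sA_le fjg _; apply/sA_meet.
Qed.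

Lemma pclosure_distributive_join S j :
  pclosure (sA_union S) = sA j -> distributive_join S j.
Proof.
move=> clS.
have Sj s : S s -> s <= j.
  by move=> Ss; apply: sA_subset_le => x sx; rewrite -clS; apply: pclosure_sub; exists s.
split.
  split=> // u Su; apply: sA_subset_le => x; rewrite -clS.
  exact: pclosure_min (@pclosed_sA u) (sA_union_sub Su) x.
move=> a; split=> [_ [s Ss ->]|u aSu]; first exact: leI2 (lexx a) (Sj s Ss).
apply: sA_subset_le => x /sA_meet[ax]; rewrite -clS => clx; apply: contrapT => nux.
have [y [[ay nuy] [s Ss sy]]] := clx _ (@popen_diff a u) (conj ax nux).
have asu : a `&` s <= u by apply: aSu; exists s.
by apply: nuy; apply: sA_le asu _; apply/sA_meet.
Qed.

Lemma distributive_joinP S j :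
  distributive_join S j <-> pclosure (sA_union S) = sA j.
Proof.
by split; [exact: distributive_join_pclosure | exact: pclosure_distributive_join].
Qed.

Lemma kappa_clopen_upsetP (K : Type) U : kappa_clopen_upset K U ->
  exists2 S, card_lt {s | S s} K & U = sA_union S.
Proof.
move=> [I [F [cI cF eU]]].
pose S a := exists2 i, I i & F i = sA a.
exists S.
  pose idx (s : {a | S a}) := cid2 (proj2_sig s).
  apply: (card_lt_inj (f := fun s => exist I _ (s2valP (idx s)))) cI.
  move=> s1 s2 /(congr1 sval) /= e12; apply/sval_inj/sA_inj.
  by rewrite -(s2valP' (idx s1)) -(s2valP' (idx s2)) e12.
apply: funext => x; apply: propext; rewrite eU; split.
  move=> [i [Ii Fix]]; have [a Fa] := clopen_upsetP (cF i Ii).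
  by exists a; [exists i | rewrite -Fa].
by move=> [a [i Ii Fa] ax]; exists i; rewrite Fa.
Qed.

Lemma kappa_clopen_upset_union (K : Type) S :
  card_lt {s | S s} K -> kappa_clopen_upset K (sA_union S).
Proof.
move=> cS; have [[e einj] _] := cS.
exists (fun i => exists s, e s = i), (fun i x => exists2 s, e s = i & sA (sval s) x).
split.
- pose pre (i : {i | exists s, e s = i}) := cid (proj2_sig i).
  apply: (card_lt_inj (f := fun i => sval (pre i))) cS.
  move=> i1 i2 e12; apply: sval_inj.
  by rewrite -(proj2_sig (pre i1)) -(proj2_sig (pre i2)) e12.
- move=> _ [s <-].
  have -> : (fun x => exists2 s', e s' = e s & sA (sval s') x) = sA (sval s).
    apply: funext => x; apply: propext; split=> [[s' /einj -> //]|sx].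
    by exists s.
  exact: clopen_upset_sA.
- move=> x; split=> [[a Sa ax]|[i [_ [s _ sx]]]].
    by exists (e (exist _ a Sa)); split; [exists (exist _ a Sa) | exists (exist _ a Sa)].
  by exists (sval s); [exact: proj2_sig s |].
Qed.

End Priestley.

Theorem theorem5p18 (disp : Order.disp_t) (A : tbDistrLatticeType disp) (K : Type) :
  regular_cardinal K ->
  (kappa_frame A K <->
   forall U : pspace A -> Prop, kappa_clopen_upset K U ->
     clopen_upset (pclosure U)).
Proof.
move=> _; split.
- move=> frame U /kappa_clopen_upsetP[S cS ->].
  have [j /distributive_joinP ->] := frame S cS.
  exact: clopen_upset_sA.
- move=> clopen_cl S cS.
  have [j clj] := clopen_upsetP (clopen_cl _ (kappa_clopen_upset_union cS)).
  by exists j; apply/distributive_joinP.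
Qed.
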